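(* Let $S=(s_{ij})$ be a real matrix of order $n+1$ and $C=(c_{ij})$ a real matrix of order $n$, with spectra (counted with multiplicities) $\sigma(S)=(\lambda_1,\ldots,\lambda_{n+1})$ and $\sigma(C)=(\mu_1,\ldots,\mu_n)$. Suppose $s_{ij}\ge|c_{ij}|$ for $1\le i,j\le n$, $s_{i,n+1}\ge0$ for $i=1,\ldots,n+1$, and let $\varphi^{(1)}_{n+1,i},\varphi^{(2)}_{n+1,i}\ge0$ ($i=1,\ldots,n$) satisfy $\varphi^{(1)}_{n+1,i}+\varphi^{(2)}_{n+1,i}=s_{n+1,i}$. Then for every $0\le\gamma\le1$, the nonnegative $(2n+1)\times(2n+1)$ matrices $M_{\pm\gamma}$ defined as follows have spectra $(\lambda_1,\ldots,\lambda_{n+1},\pm\gamma\mu_1,\ldots,\pm\gamma\mu_n)$ respectively: for $1\le i,j\le n$, the entries of $M_{\pm\gamma}$ in rows $2i-1,2i$ and columns $2j-1,2j$ form the block $\begin{pmatrix}\frac{s_{ij}\pm\gamma c_{ij}}{2}&\frac{s_{ij}\mp\gamma c_{ij}}{2}\\ \frac{s_{ij}\mp\gamma c_{ij}}{2}&\frac{s_{ij}\pm\gamma c_{ij}}{2}\end{pmatrix}$; the entries in rows $2i-1,2i$ and column $2n+1$ are both $s_{i,n+1}$; the entries in row $2n+1$ and columns $2j-1,2j$ are $\varphi^{(1)}_{n+1,j},\varphi^{(2)}_{n+1,j}$; and the $(2n+1,2n+1)$ entry is $s_{n+1,n+1}$.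
   Context: Spectra are counted with multiplicities. Nonnegative means entrywise nonnegative. *)

From HB Require Import structures.
From mathcomp Require Import all_boot all_order all_algebra.
From mathcomp Require Import Rstruct complex.
From Stdlib Require Import Reals.
Set Implicit Arguments. Unset Strict Implicit. Unset Printing Implicit Defensive.
Import Order.TTheory GRing.Theory Num.Theory.
Local Open Scope ring_scope.

Notation RR := Rdefinitions.R.

Definition is_spectrum (m : nat) (A : 'M[RR]_m) (s : seq RR[i]) : Prop :=
  map_poly (real_complex RR) (char_poly A) = \prod_(x <- s) ('X - x%:P).

(* Entry (i,j) of a matrix, addressed by 0-based natural numbers
   (0 outside the range; only used inside the range below). *)
Definition ent (m p : nat) (A : 'M[RR]_(m, p)) (i j : nat) : RR :=
  match insub i, insub j with
  | Some i', Some j' => A i' j'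
  | _, _ => 0
  end.

(* The (2n+1)x(2n+1) matrix M_{eps*gamma}, eps = +1 or -1, 0-based indices:
   paper rows 2i-1, 2i (1-based, 1<=i<=n) are 0-based rows 2(i-1), 2(i-1)+1,
   so the block index is k./2 and the position within the block is odd k.
   phi1, phi2 : 'rV_n hold phi^(1)_{n+1,j}, phi^(2)_{n+1,j}. *)
Definition Mgam (n : nat) (S : 'M[RR]_n.+1) (C : 'M[RR]_n)
    (phi1 phi2 : 'rV[RR]_n) (eps gamma : RR) : 'M[RR]_((2 * n).+1) :=
  \matrix_(k < (2 * n).+1, l < (2 * n).+1)
    if (ltn k (2 * n)) then
      if (ltn l (2 * n)) then
        (if odd k == odd l
         then (ent S k./2 l./2 + eps * gamma * ent C k./2 l./2) / 2
         else (ent S k./2 l./2 - eps * gamma * ent C k./2 l./2) / 2)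
      else ent S k./2 n
    else
      if (ltn l (2 * n)) then
        (if odd l then ent phi2 0 l./2 else ent phi1 0 l./2)
      else ent S n n.

Definition nonneg_mx (m p : nat) (A : 'M[RR]_(m, p)) : Prop :=
  forall i j, 0 <= A i j.

From HB Require Import structures.
From mathcomp Require Import all_boot all_order all_algebra.
From mathcomp Require Import Rstruct complex.
From Stdlib Require Import Reals.
From mathcomp Require Import ring lra zify.
Set Implicit Arguments.
Unset Strict Implicit.
Unset Printing Implicit Defensive.
Import Order.TTheory GRing.Theory Num.Theory.
Local Open Scope ring_scope.

(* Put u_i = e_(2i-1) + e_(2i) and v_i = e_(2i-1) - e_(2i).  Each 2x2 block of
   M = M_(eps gamma) is symmetric with constant diagonal, so, using
   phi1_j + phi2_j = s_(n+1,j),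
     M u_j = sum_i s_ij u_i + s_(n+1,j) e_(2n+1),
     M e_(2n+1) = sum_i s_(i,n+1) u_i + s_(n+1,n+1) e_(2n+1),
     M v_j = eps gamma sum_i c_ij v_i + (phi1_j - phi2_j) e_(2n+1).
   In the basis (u, e_(2n+1), v) the matrix M is thus block upper triangular
   with diagonal blocks S and eps gamma C, whence its spectrum.  Nonnegativity
   is |eps gamma c_ij| <= |c_ij| <= s_ij. *)

Lemma char_poly_castmx (R : nzRingType) m1 m2 (e : m1 = m2) (A : 'M[R]_m1) :
  char_poly (castmx (e, e) A) = char_poly A.
Proof. by case: m2 / e; rewrite castmx_id. Qed.

Lemma char_poly_ublock (R : comNzRingType) m1 m2
    (A : 'M[R]_m1) (B : 'M[R]_(m1, m2)) (D : 'M[R]_m2) :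
  char_poly (block_mx A B 0 D) = char_poly A * char_poly D.
Proof.
rewrite /char_poly /char_poly_mx (scalar_mx_block m1 m2 'X) map_block_mx map_mx0.
by rewrite opp_block_mx add_block_mx oppr0 addr0 det_ublock.
Qed.

Lemma char_poly_similar (F : fieldType) m (A B P : 'M[F]_m) :
  P \in unitmx -> A *m P = P *m B -> char_poly A = char_poly B.
Proof.
move=> uP AP_PB; pose Px := map_mx polyC P.
have AxP_PBx : char_poly_mx A *m Px = Px *m char_poly_mx B.
  by rewrite mulmxBl mulmxBr mul_scalar_mx mul_mx_scalar -!map_mxM AP_PB.
apply: (mulIf (x := \det Px)); last first.
  by rewrite [char_poly B * _]mulrC -!det_mulmx AxP_PBx.
by rewrite det_map_mx polyC_eq0 -unitfE -unitmxE.
Qed.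

Lemma size_roots_char_poly (F : fieldType) m (A : 'M[F]_m) (s : seq F) :
  char_poly A = \prod_(x <- s) ('X - x%:P) -> size s = m.
Proof. by move=> chA; have := size_char_poly A; rewrite chA size_prod_XsubC => -[]. Qed.

Lemma char_polyZ (F : fieldType) m (a : F) (A : 'M[F]_m) (s : seq F) :
  char_poly A = \prod_(x <- s) ('X - x%:P) ->
  char_poly (a *: A) = \prod_(x <- s) ('X - (a * x)%:P).
Proof.
move=> chA; have size_s : size s = m by exact: size_roots_char_poly chA.
have [->|a_neq0] := eqVneq a 0.
  rewrite scale0r char_poly_trig; last by apply/is_trig_mxP => i j _; rewrite mxE.
  rewrite (eq_bigr (fun=> 'X)) => [|i _]; last by rewrite mxE subr0.
  rewrite [RHS](eq_bigr (fun=> 'X)) => [|x _]; last by rewrite mul0r subr0.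
  by rewrite prodr_const card_ord big_const_seq count_predT iter_mulr_1 size_s.
pose q : {poly F} := a^-1 *: 'X.
have aX_q (x : F) : 'X - (a * x)%:P = a%:P * (('X - x%:P) \Po q).
  rewrite rmorphB /= comp_polyX comp_polyC.
  by rewrite mulrBr mul_polyC scalerA mulfV // scale1r polyCM.
have chZ : char_poly_mx (a *: A) = a%:P *: map_mx (comp_poly q) (char_poly_mx A).
  apply/matrixP => i j; rewrite !mxE; case: (i == j); rewrite ?mulr1n -?aX_q //.
  by rewrite !mulr0n !sub0r rmorphN /= comp_polyC polyCM mulrN.
rewrite /char_poly chZ detZ (det_map_mx (comp_poly q)) /= -/(char_poly A) chA.
rewrite rmorph_prod /= -size_s.
rewrite -iter_mulr_1 -count_predT -big_const_seq -big_split /=.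
by apply: eq_bigr => x _; rewrite aX_q.
Qed.

Lemma big_ord_pick (R : pzSemiRingType) N a (f : nat -> R) :
  \sum_(i < N) ((a == i :> nat)%:R * f i) = if (a < N)%nat then f a else 0.
Proof.
case: ltnP => [lt_aN|le_Na].
  rewrite (bigD1 (Ordinal lt_aN)) //= eqxx mul1r big1 ?addr0 // => i.
  by rewrite -val_eqE eq_sym => /negbTE /= ->; rewrite mul0r.
by rewrite big1 // => i _; rewrite gtn_eqF ?mul0r // (leq_trans (ltn_ord i)).
Qed.

Lemma big_ord_pick_shift (R : pzSemiRingType) N c a (f : nat -> R) :
  \sum_(i < N) ((a == i + c)%nat%:R * f i) =
    if ((c <= a) && (a - c < N))%nat then f (a - c)%nat else 0.
Proof.
case: (leqP c a) => [le_ca|lt_ac] /=.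
  rewrite -big_ord_pick; apply: eq_bigr => i _.
  by congr (_%:R * _); apply/eqP/eqP; lia.
by rewrite big1 // => i _; rewrite ltn_eqF ?mul0r // ltn_addl.
Qed.

Lemma big_ord_double (V : nmodType) n (f : nat -> V) :
  \sum_(l < ((2 * n).+1)%nat) f l = \sum_(m < n) (f m.*2 + f m.*2.+1) + f n.*2.
Proof.
rewrite mul2n big_ord_recr /=; congr (_ + _).
elim: n => [|n IH]; first by rewrite !big_ord0.
by rewrite doubleS !big_ord_recr /= IH -addrA.
Qed.

Lemma ent_ord m p (A : 'M[RR]_(m, p)) (i : 'I_m) (j : 'I_p) : ent A i j = A i j.
Proof. by rewrite /ent !valK. Qed.

Lemma ent_lt m p (A : 'M[RR]_(m, p)) i j (lt_im : (i < m)%nat) (lt_jp : (j < p)%nat) :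
  ent A i j = A (Ordinal lt_im) (Ordinal lt_jp).
Proof. exact: (ent_ord A (Ordinal lt_im) (Ordinal lt_jp)). Qed.

Lemma ent_if_lt m p (A : 'M[RR]_(m, p)) i j :
  (if (i < m)%nat then ent A i j else 0) = ent A i j.
Proof. by case: ifPn => // /negbTE ge_im; rewrite /ent insubF. Qed.

Section ChangeOfBasis.
Variable n : nat.
Local Notation N := ((2 * n).+1)%nat.

(* 0-based: the columns of T are u_0, ..., u_(n-1), e_(2n), v_0, ..., v_(n-1). *)
Definition T : 'M[RR]_N := \matrix_(k, i)
  ((i == k./2 :> nat)%:R + (i == (k./2 + n.+1)%nat :> nat)%:R * (-1) ^+ odd k).

(* The columns of T are orthogonal, with squared norms 2 except column n. *)
Definition Tinv : 'M[RR]_N :=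
  \matrix_(i, k) ((if i == n :> nat then 1 else 2^-1) * T k i).

Lemma double_lt_N m : (m <= n)%nat -> (m.*2 < N)%nat.
Proof. lia. Qed.

Lemma doubleS_lt_N m : (m < n)%nat -> (m.*2.+1 < N)%nat.
Proof. lia. Qed.

Lemma ent_T k i : (k < N)%nat -> (i < N)%nat ->
  ent T k i = (i == k./2 :> nat)%:R + (i == (k./2 + n.+1)%nat :> nat)%:R * (-1) ^+ odd k.
Proof. by move=> lt_kN lt_iN; rewrite (ent_lt T lt_kN lt_iN) mxE. Qed.

Lemma ent_T_even m i : (m < n)%nat -> (i < N)%nat ->
  ent T m.*2 i = (i == m :> nat)%:R + (i == (m + n.+1)%nat :> nat)%:R.
Proof. by move=> lt_mn lt_iN; rewrite ent_T ?doubleK ?odd_double ?mulr1 //; lia. Qed.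

Lemma ent_T_odd m i : (m < n)%nat -> (i < N)%nat ->
  ent T m.*2.+1 i = (i == m :> nat)%:R - (i == (m + n.+1)%nat :> nat)%:R.
Proof.
move=> lt_mn lt_iN; rewrite ent_T -?uphalfE ?uphalf_double /= ?odd_double ?mulrN1 //; lia.
Qed.

Lemma ent_T_last i : (i < N)%nat -> ent T n.*2 i = (i == n :> nat)%:R.
Proof.
move=> lt_iN; rewrite ent_T ?doubleK //; last by lia.
by rewrite (_ : (i == (n + n.+1)%nat :> nat) = false) ?mul0r ?addr0 //; apply/eqP; lia.
Qed.

Lemma mulmxT_entry (A : 'M[RR]_N) (k j : 'I_N) :
  (A *m T) k j =
    if (j < n)%nat then ent A k j.*2 + ent A k j.*2.+1
    else if j == n :> nat then ent A k n.*2
    else ent A k (j - n.+1).*2 - ent A k (j - n.+1).*2.+1.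
Proof.
have lt_jN := ltn_ord j.
rewrite !mxE (eq_bigr (fun l : 'I_N => ent A k l * ent T l j)); last first.
  by move=> l _; rewrite !ent_ord.
rewrite (big_ord_double n (fun l => ent A k l * ent T l j)) ent_T_last //.
rewrite (eq_bigr (fun m : 'I_n => (j == m :> nat)%:R * (ent A k m.*2 + ent A k m.*2.+1)
    + (j == (m + n.+1)%nat :> nat)%:R * (ent A k m.*2 - ent A k m.*2.+1))); last first.
  by move=> m _; rewrite ent_T_even // ent_T_odd //; ring.
rewrite big_split /= (big_ord_pick _ _ (fun m => ent A k m.*2 + ent A k m.*2.+1)).
rewrite (big_ord_pick_shift _ _ _ (fun m => ent A k m.*2 - ent A k m.*2.+1)).
case: ltngtP => [lt_jn|lt_nj|eq_jn] /=.
- by rewrite mulr0 !addr0.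
- by rewrite (_ : (j - n.+1 < n)%nat) ?mulr0 ?add0r ?addr0 //; lia.
- by rewrite mulr1 !add0r.
Qed.

Lemma mulTmx_entry (A : 'M[RR]_N) (k j : 'I_N) :
  (T *m A) k j =
    if (k < 2 * n)%nat then ent A k./2 j + (-1) ^+ odd k * ent A (k./2 + n.+1)%nat j
    else ent A n j.
Proof.
rewrite !mxE (eq_bigr (fun i : 'I_N => (k./2 == i :> nat)%:R * ent A i j
    + (-1) ^+ odd k * (((k./2 + n.+1)%nat == i :> nat)%:R * ent A i j))); last first.
  by move=> i _; rewrite ent_ord !mxE (eq_sym (i : nat)) (eq_sym (i : nat)); ring.
rewrite big_split /= -mulr_sumr.
rewrite (big_ord_pick _ _ (fun i => ent A i j)) (big_ord_pick _ _ (fun i => ent A i j)).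
have lt_kN := ltn_ord k; case: (ltnP k (2 * n)) => [lt_k2n|ge_k].
  by rewrite !ifT //; lia.
have -> : k./2 = n by lia.
by rewrite ifT ?ifF ?mulr0 ?addr0 //; lia.
Qed.

Lemma Tinv_mulT : Tinv *m T = 1%:M.
Proof.
apply/matrixP => i j; rewrite mulmxT_entry mxE.
have lt_iN := ltn_ord i; have lt_jN := ltn_ord j.
have ent_Tinv k : (k < N)%nat -> ent Tinv i k = (if i == n :> nat then 1 else 2^-1) * ent T k i.
  by move=> lt_kN; rewrite (ent_lt Tinv lt_iN lt_kN) (ent_lt T lt_kN lt_iN) mxE.
rewrite -val_eqE /=.
case: ltngtP => [lt_jn|lt_nj|eq_nj].
- rewrite !ent_Tinv ?doubleS_lt_N ?double_lt_N ?(ltnW lt_jn) //.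
  rewrite ent_T_even // ent_T_odd // -mulrDr addrACA subrr addr0.
  have [->|ne_ij] := eqVneq (i : nat) j; last by rewrite mulr0n addr0 mulr0.
  by rewrite ltn_eqF // mulr1n; field.
- have lt_mn : (j - n.+1 < n)%nat by lia.
  rewrite !ent_Tinv ?doubleS_lt_N ?double_lt_N ?(ltnW lt_mn) //.
  rewrite ent_T_even // ent_T_odd // -mulrBr subnK // opprB addrC addrA subrK.
  have [->|ne_ij] := eqVneq (i : nat) j; last by rewrite mulr0n addr0 mulr0.
  by rewrite gtn_eqF // mulr1n; field.
- by rewrite ent_Tinv ?double_lt_N // ent_T_last // eq_nj; case: eqP; rewrite ?mulr1 ?mulr0.
Qed.

End ChangeOfBasis.

Section Mgam.
Variables (n : nat) (S : 'M[RR]_n.+1) (C : 'M[RR]_n) (phi1 phi2 : 'rV[RR]_n).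
Variables (eps gamma : RR).
Local Notation N := ((2 * n).+1)%nat.
Local Notation M := (Mgam S C phi1 phi2 eps gamma).

Lemma ent_Mgam k l : (k < N)%nat -> (l < N)%nat ->
  ent M k l =
    if (k < 2 * n)%nat then
      if (l < 2 * n)%nat then
        (if odd k == odd l
         then (ent S k./2 l./2 + eps * gamma * ent C k./2 l./2) / 2
         else (ent S k./2 l./2 - eps * gamma * ent C k./2 l./2) / 2)
      else ent S k./2 n
    else
      if (l < 2 * n)%nat then
        (if odd l then ent phi2 0 l./2 else ent phi1 0 l./2)
      else ent S n n.
Proof. by move=> lt_kN lt_lN; rewrite (ent_lt M lt_kN lt_lN) mxE. Qed.

Lemma Mgam_nonneg :
  `|eps| = 1 -> 0 <= gamma <= 1 ->
  (forall i j : 'I_n, `|C i j| <= S (widen_ord (leqnSn n) i) (widen_ord (leqnSn n) j)) ->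
  (forall i : 'I_n.+1, 0 <= S i ord_max) ->
  (forall j : 'I_n, 0 <= phi1 0 j /\ 0 <= phi2 0 j) ->
  nonneg_mx M.
Proof.
move=> eps_unit /andP[gamma_ge0 gamma_le1] C_le_S S_last_ge0 phi_ge0 k l.
have [lt_kN lt_lN] := (ltn_ord k, ltn_ord l); rewrite mxE /ltn /=.
case: ifPn => lt_k2n; case: ifPn => lt_l2n.
- have [lt_kn lt_ln] : (k./2 < n)%nat /\ (l./2 < n)%nat by split; lia.
  have le_CS : `|eps * gamma * ent C k./2 l./2| <= ent S k./2 l./2.
    have := C_le_S (Ordinal lt_kn) (Ordinal lt_ln); rewrite -!ent_ord /=.
    apply: le_trans; rewrite !normrM eps_unit mul1r (ger0_norm gamma_ge0).
    by rewrite ler_piMl.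
  by move: le_CS; rewrite ler_norml => /andP[? ?]; case: eqP => _; lra.
- have lt_kn : (k./2 < n.+1)%nat by lia.
  by rewrite (ent_lt S lt_kn (ltnSn n)); apply: S_last_ge0.
- have lt_ln : (l./2 < n)%nat by lia.
  have [phi1_ge0 phi2_ge0] := phi_ge0 (Ordinal lt_ln).
  by case: (odd l); rewrite (ent_lt _ (ltn0Sn 0) lt_ln).
- by rewrite (ent_lt S (ltnSn n) (ltnSn n)); apply: S_last_ge0.
Qed.

Lemma Mgam_last_col k : (k < N)%nat -> ent M k n.*2 = ent S k./2 n.
Proof.
move=> lt_kN; rewrite ent_Mgam ?double_lt_N // -mul2n ltnn.
by case: ltnP => // ge_k; rewrite (_ : k./2 = n) //; lia.
Qed.

Hypothesis phi_sum :
  forall j : 'I_n, phi1 0 j + phi2 0 j = S ord_max (widen_ord (leqnSn n) j).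

Lemma Mgam_pair_add k m : (k < N)%nat -> (m < n)%nat ->
  ent M k m.*2 + ent M k m.*2.+1 = ent S k./2 m.
Proof.
move=> lt_kN lt_mn.
rewrite !ent_Mgam ?double_lt_N ?doubleS_lt_N ?(ltnW lt_mn) // !mul2n ltn_double ltn_Sdouble lt_mn.
rewrite -uphalfE uphalf_double doubleK /= odd_double.
case: ltnP => [_|ge_k]; first by case: (odd k) => /=; field.
rewrite (_ : k./2 = n); last by lia.
by have := phi_sum (Ordinal lt_mn); rewrite -!ent_ord.
Qed.

Lemma Mgam_pair_sub k m : (k < N)%nat -> (m < n)%nat ->
  ent M k m.*2 - ent M k m.*2.+1 =
    if (k < 2 * n)%nat then (-1) ^+ odd k * (eps * gamma) * ent C k./2 m
    else ent phi1 0 m - ent phi2 0 m.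
Proof.
move=> lt_kN lt_mn.
rewrite !ent_Mgam ?double_lt_N ?doubleS_lt_N ?(ltnW lt_mn) // !mul2n ltn_double ltn_Sdouble lt_mn.
rewrite -uphalfE uphalf_double doubleK /= odd_double.
by case: ifP => _ //; case: (odd k) => /=; field.
Qed.

Definition B : 'M[RR]_N := \matrix_(i, j)
  if (i <= n)%nat then
    if (j <= n)%nat then ent S i j
    else (i == n :> nat)%:R * (ent phi1 0 (j - n.+1) - ent phi2 0 (j - n.+1))
  else if (j <= n)%nat then 0 else eps * gamma * ent C (i - n.+1) (j - n.+1).

Lemma ent_B i j : (i < N)%nat -> (j < N)%nat ->
  ent B i j =
    if (i <= n)%nat then
      if (j <= n)%nat then ent S i j
      else (i == n :> nat)%:R * (ent phi1 0 (j - n.+1) - ent phi2 0 (j - n.+1))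
    else if (j <= n)%nat then 0 else eps * gamma * ent C (i - n.+1) (j - n.+1).
Proof. by move=> lt_iN lt_jN; rewrite (ent_lt B lt_iN lt_jN) mxE. Qed.

Lemma Mgam_mulT : M *m T n = T n *m B.
Proof.
apply/matrixP => k j; rewrite mulmxT_entry mulTmx_entry.
have lt_kN := ltn_ord k; have lt_jN := ltn_ord j.
case: (ltnP k (2 * n)) => [lt_k2n|ge_k].
  have lt_hn : (k./2 < n)%nat by lia.
  rewrite !ent_B; try lia.
  rewrite (ltnW lt_hn) (ltn_eqF lt_hn) addnK.
  have -> : (k./2 + n.+1 <= n)%nat = false by lia.
  case: ltngtP => [lt_jn|lt_nj|eq_jn].
  - by rewrite Mgam_pair_add // mulr0 addr0.
  - rewrite Mgam_pair_sub ?lt_k2n ?mul0r ?add0r ?mulrA //; lia.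
  - by rewrite eq_jn Mgam_last_col // mulr0 addr0.
have -> : (k : nat) = n.*2 by lia.
rewrite ent_B ?leqnn //; try lia.
case: ltngtP => [lt_jn|lt_nj|eq_jn].
- by rewrite Mgam_pair_add ?double_lt_N ?doubleK.
- rewrite Mgam_pair_sub; [|exact: double_lt_N|lia].
  by rewrite -mul2n ltnn eqxx mul1r.
- by rewrite eq_jn Mgam_last_col ?double_lt_N ?doubleK.
Qed.

Lemma char_poly_B : char_poly B = char_poly S * char_poly ((eps * gamma) *: C).
Proof.
have e_dim : N = (n.+1 + n)%nat by lia.
rewrite -(char_poly_castmx e_dim) -[castmx _ B]submxK.
have -> : dlsubmx (castmx (e_dim, e_dim) B) = 0.
  apply/matrixP => i j; rewrite !mxE castmxE mxE /= ifF; last by lia.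
  by rewrite leq_ord.
have -> : ulsubmx (castmx (e_dim, e_dim) B) = S.
  by apply/matrixP => i j; rewrite !mxE castmxE mxE /= !leq_ord ent_ord.
have -> : drsubmx (castmx (e_dim, e_dim) B) = (eps * gamma) *: C.
  by apply/matrixP => i j; rewrite !mxE castmxE mxE /= !ifF ?addKn ?ent_ord //; lia.
exact: char_poly_ublock.
Qed.

Lemma Mgam_spectrum lam mu : is_spectrum S lam -> is_spectrum C mu ->
  is_spectrum M (lam ++ [seq ((eps * gamma)%:C * x)%C | x <- mu]).
Proof.
rewrite /is_spectrum => specS specC.
have [_ unit_T] := mulmx1_unit (Tinv_mulT n).
rewrite (char_poly_similar unit_T Mgam_mulT) char_poly_B rmorphM /= specS.
rewrite big_cat big_map /=; congr (_ * _).
by move: specC; rewrite !map_char_poly map_mxZ; apply: char_polyZ.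
Qed.

End Mgam.

Theorem theorem6 (n : nat) (S : 'M[RR]_n.+1) (C : 'M[RR]_n)
    (lam : seq RR[i]) (mu : seq RR[i]) (phi1 phi2 : 'rV[RR]_n) (gamma : RR) :
  is_spectrum S lam -> is_spectrum C mu ->
  (forall i j : 'I_n, `|C i j| <= S (widen_ord (leqnSn n) i) (widen_ord (leqnSn n) j)) ->
  (forall i : 'I_n.+1, 0 <= S i ord_max) ->
  (forall j : 'I_n, 0 <= phi1 0 j /\ 0 <= phi2 0 j) ->
  (forall j : 'I_n, phi1 0 j + phi2 0 j = S ord_max (widen_ord (leqnSn n) j)) ->
  0 <= gamma <= 1 ->
  (nonneg_mx (Mgam S C phi1 phi2 1 gamma) /\
   is_spectrum (Mgam S C phi1 phi2 1 gamma)
     (lam ++ [seq (gamma%:C * x)%C | x <- mu])) /\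
  (nonneg_mx (Mgam S C phi1 phi2 (-1) gamma) /\
   is_spectrum (Mgam S C phi1 phi2 (-1) gamma)
     (lam ++ [seq (- (gamma%:C * x))%C | x <- mu])).
Proof.
move=> specS specC C_le_S S_last_ge0 phi_ge0 phi_sum gamma01.
have spec_eps eps := Mgam_spectrum eps gamma phi_sum specS specC.
split; split.
- by apply: Mgam_nonneg; rewrite ?normr1.
- by have := spec_eps 1; rewrite mul1r.
- by apply: Mgam_nonneg; rewrite ?normrN ?normr1.
- have := spec_eps (-1); rewrite mulN1r.
  by under eq_map do rewrite rmorphN mulNr.
Qed.
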